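(* Let $G$ be a finite simple (unweighted) graph with $n$ vertices. Then \[\sum_{\lambda\vdash n}[X_{P_\lambda}]X_G=1,\] i.e. $\tau_G(1)=1$.
   Context: $X_G=\sum_\kappa\prod_v x_{\kappa(v)}$ over proper colourings $\kappa:V(G)\to\{1,2,\dots\}$. $P_\lambda$ is the disjoint union of paths $P_{\lambda_1},\dots,P_{\lambda_{\ell(\lambda)}}$ ($P_n$ the path on $n$ vertices); $\{X_{P_\lambda}\}$ is a basis of the algebra of symmetric functions over $\mathbb{Q}$, and $[X_{P_\lambda}]f$ is the coefficient of $X_{P_\lambda}$ in $f$. $\tau_G(x)=\sum_\lambda [X_{P_\lambda}]X_G\, x^{\ell(\lambda)}$. *)

From mathcomp Require Import all_boot all_algebra.
From mathcomp Require Import mpoly.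
Set Implicit Arguments. Unset Strict Implicit. Unset Printing Implicit Defensive.
Import GRing.Theory.
Local Open Scope ring_scope.

Definition proper_col (V : finType) (e : rel V) (N : nat) (k : {ffun V -> 'I_N}) :=
  [forall x, forall y, e x y ==> (k x != k y)].

(* Chromatic symmetric function X_G restricted to N variables x_0..x_{N-1}. *)
Definition chrom (V : finType) (e : rel V) (N : nat) : {mpoly rat[N]} :=
  \sum_(k : {ffun V -> 'I_N} | proper_col e k) \prod_(v : V) 'X_(k v).

(* The disjoint union of paths P_{l_1}, ..., P_{l_m} : vertex (i, a) with a < l_i,
   edges between (i,a) and (i,a+1). *)
Definition pu_vert (l : seq nat) : finType :=
  {i : 'I_(size l) & 'I_(nth 0%N l i)}.
Definition pu_edge (l : seq nat) : rel (pu_vert l) :=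
  fun x y => (tag x == tag y) &&
     (((val (tagged x)).+1 == val (tagged y)) || ((val (tagged y)).+1 == val (tagged x))).

(* Partitions of n are encoded as weakly decreasing n-tuples with entries in
   0..n summing to n (padded by zeros); shape drops the zeros. *)
Definition ptuple (n : nat) := (n.-tuple 'I_n.+1)%type.
Definition is_partn (n : nat) (t : ptuple n) : bool :=
  sorted geq (map val t) && (sumn (map val t) == n).
Definition shape (n : nat) (t : ptuple n) : seq nat :=
  filter (fun k => 0 < k)%N (map val t).

Definition XP (n N : nat) (t : ptuple n) : {mpoly rat[N]} :=
  chrom (@pu_edge (shape t)) N.

From Pilot Require Import Defs.
From mathcomp Require Import all_boot all_algebra.
From mathcomp Require Import mpoly.
Set Implicit Arguments. Unset Strict Implicit. Unset Printing Implicit Defensive.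
Import GRing.Theory.
Local Open Scope ring_scope.

(* Inclusion-exclusion over the edge sets S of G turns the properness condition
   into X_G = sum_S (-1)^|S| p_lambda(S), where lambda(S) lists the component
   sizes of (V, S) and p_mu is the power-sum product.  For a disjoint union of
   paths P_lambda the only edge set with l(lambda) components is the full one,
   whose term is +-p_lambda; by induction on n - l(lambda) every p_lambda, hence
   X_G, is a rational combination of the X_{P_mu}.  Every loopless X_H on n
   vertices has coefficient n! at x_1 ... x_n (one per injective colouring), so
   comparing that coefficient gives sum_mu c_mu = 1. *)

Lemma prodr_nat_forall (R : comNzRingType) (T : finType) (A : {pred T})
    (b : T -> bool) :
  \prod_(p in A) ((b p)%:R : R) = [forall p in A, b p]%:R.
Proof.
case: (boolP [forall p in A, b p]) => [/forall_inP allb|/forall_inPn [p pA nbp]].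
  by apply: big1 => p /allb ->.
by rewrite (bigD1 p) //= (negbTE nbp) mul0r.
Qed.

Lemma inclusion_exclusion_forall (R : comNzRingType) (T : finType)
    (E : {set T}) (b : T -> bool) :
  [forall p in E, ~~ b p]%:R =
  \sum_(S : {set T} | S \subset E) (-1) ^+ #|S| * [forall p in S, b p]%:R :> R.
Proof.
rewrite -prodr_nat_forall.
have -> : \prod_(p in E) ((~~ b p)%:R : R) =
    \prod_p ((if p \in E then - (b p)%:R else 0) + 1).
  rewrite [RHS](bigID (mem E)) /= [X in _ * X]big1 ?mulr1; last first.
    by move=> p /negbTE ->; rewrite add0r.
  by apply: eq_bigr => p ->; case: (b p); rewrite ?addNr ?oppr0 ?add0r.
rewrite bigA_distr /= (bigID (fun S : {set T} => S \subset E)) /=.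
rewrite [X in _ + X]big1 ?addr0; last first.
  by move=> S /subsetPn [p pS pE]; rewrite (bigD1 p) //= pS (negbTE pE) mul0r.
apply: eq_bigr => S sSE; rewrite -prodr_nat_forall -big_mkcond /=.
rewrite (eq_bigr (fun p => -1 * (b p)%:R)) ?big_split ?prodr_const //=.
by move=> p pS; rewrite (subsetP sSE p pS) mulN1r.
Qed.

Section Components.
Variable V : finType.
Implicit Types (S E : {set V * V}).

Definition edge_rel S : rel V := fun x y => ((x, y) \in S) || ((y, x) \in S).

Lemma edge_rel_connect_sym S : connect_sym (edge_rel S).
Proof. by apply: sym_connect_sym => x y; rewrite /edge_rel orbC. Qed.

Definition comp_root S : V -> V := fingraph.root (edge_rel S).

Definition comp_sizes S : seq nat :=
  [seq #|[pred v | comp_root S v == r]| | r <- enum (roots (edge_rel S))].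

Lemma comp_root_in_roots S v : comp_root S v \in roots (edge_rel S).
Proof. exact: (roots_root (edge_rel_connect_sym S)). Qed.

Lemma comp_root_fix S r : r \in roots (edge_rel S) -> comp_root S r = r.
Proof. by move/eqP. Qed.

Lemma comp_rootP S x y :
  reflect (comp_root S x = comp_root S y) (connect (edge_rel S) x y).
Proof. exact: (fingraph.rootP (edge_rel_connect_sym S)). Qed.

Lemma closed_connect_edge S (a : pred V) x y :
  (forall p, p \in S -> (p.1 \in a) = (p.2 \in a)) ->
  connect (edge_rel S) x y -> (x \in a) = (y \in a).
Proof.
move=> aS; apply: closed_connect => u w /orP [] /aS //= ->.
Qed.

Lemma constant_on_edgesE (T : eqType) S (k : V -> T) :
  [forall p in S, k p.1 == k p.2] = [forall v, k v == k (comp_root S v)].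
Proof.
apply/forall_inP/forallP => [kS v|kroot p pS].
  have : (v \in [pred z | k z == k v]) = (comp_root S v \in [pred z | k z == k v]).
    apply: closed_connect_edge (connect_root _ v) => p /kS /eqP.
    by rewrite !inE => ->.
  by rewrite !inE eqxx eq_sym => /esym.
have /comp_rootP c : connect (edge_rel S) p.1 p.2.
  by apply: connect1; rewrite /edge_rel -surjective_pairing pS.
by rewrite (eqP (kroot p.1)) (eqP (kroot p.2)) c.
Qed.

Lemma comp_sizes_gt0 S : all (fun k => 0 < k)%N (comp_sizes S).
Proof.
apply/allP => x /mapP [r]; rewrite mem_enum => rS ->.
by apply/card_gt0P; exists r; rewrite inE /= comp_root_fix.
Qed.

Lemma sumn_comp_sizes S : sumn (comp_sizes S) = #|V|.
Proof.
rewrite sumnE big_map big_enum /= -sum1_card.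
rewrite [RHS](partition_big (comp_root S) (mem (roots (edge_rel S)))) /=.
  by apply: eq_bigr => r _; rewrite -sum1_card; apply: eq_bigl => v; rewrite inE.
by move=> v _; exact: comp_root_in_roots.
Qed.

Lemma size_comp_sizes S : size (comp_sizes S) = #|roots (edge_rel S)|.
Proof. by rewrite size_map cardE. Qed.

End Components.

Section PowerSums.
Variable N : nat.

Definition powersum (j : nat) : {mpoly rat[N]} := \sum_(i < N) 'X_i ^+ j.

Definition powersum_prod (s : seq nat) : {mpoly rat[N]} := \prod_(j <- s) powersum j.

Lemma powersum_prod_perm s1 s2 :
  perm_eq s1 s2 -> powersum_prod s1 = powersum_prod s2.
Proof. exact: perm_big. Qed.

Variable V : finType.
Hypothesis N_gt0 : (0 < N)%N.

(* A colouring constant on the edges of S is a free choice of colour for each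
   component; the monomial then collects one power sum per component. *)
Lemma sum_constant_on_edges (S : {set V * V}) :
  \sum_(k : {ffun V -> 'I_N} | [forall p in S, k p.1 == k p.2])
     \prod_(v : V) ('X_(k v) : {mpoly rat[N]})
  = powersum_prod (comp_sizes S).
Proof.
pose j0 := Ordinal N_gt0.
pose lift (f : {ffun V -> 'I_N}) := [ffun v => f (comp_root S v)].
pose restr (k : {ffun V -> 'I_N}) :=
  [ffun v => if v \in roots (edge_rel S) then k v else j0].
rewrite (reindex_onto lift restr); last first.
  move=> k; rewrite constant_on_edgesE => /forallP kroot; apply/ffunP => v.
  by rewrite !ffunE comp_root_in_roots (eqP (kroot v)).
rewrite (eq_bigl (fun f => f \in pffun_on j0 (roots (edge_rel S)) predT)); last first.
  move=> f; rewrite constant_on_edgesE.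
  have -> : [forall v, lift f v == lift f (comp_root S v)].
    by apply/forallP => v; rewrite !ffunE (comp_root_fix (comp_root_in_roots S v)).
  apply/eqP/pffun_onP => [restrK|[supp_f _]].
    split=> //; apply/subsetP => v; rewrite inE; apply: contraR => vNroot.
    by rewrite -restrK ffunE (negbTE vNroot).
  apply/ffunP => v; rewrite !ffunE; case: ifP => [/comp_root_fix -> //|vNroot].
  apply/esym/eqP; apply: contraFT vNroot => fv.
  by apply: (subsetP supp_f); rewrite inE.
rewrite (eq_bigr (fun f : {ffun V -> 'I_N} => \prod_(r in roots (edge_rel S))
    'X_(f r) ^+ #|[pred v | comp_root S v == r]|)); last first.
  move=> f _; rewrite (partition_big (comp_root S) (mem (roots (edge_rel S)))) /=;
    last by move=> v _; exact: comp_root_in_roots.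
  apply: eq_bigr => r _; rewrite -(prodr_const [pred v | comp_root S v == r]).
  by apply: eq_big => [v|v /eqP <-]; rewrite ?inE ?ffunE.
rewrite -(big_distr_big j0 _ predT (fun r j =>
  ('X_j : {mpoly rat[N]}) ^+ #|[pred v | comp_root S v == r]|)).
by rewrite /powersum_prod big_map big_enum.
Qed.

Lemma sum_proper_incl_excl (E : {set V * V}) :
  \sum_(k : {ffun V -> 'I_N} | [forall p in E, k p.1 != k p.2])
     \prod_(v : V) ('X_(k v) : {mpoly rat[N]})
  = \sum_(S : {set V * V} | S \subset E) (-1) ^+ #|S| *: powersum_prod (comp_sizes S).
Proof.
have indicatorE (b : bool) (x : {mpoly rat[N]}) : (if b then x else 0) = b%:R *: x.
  by case: b; rewrite ?scale1r ?scale0r.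
rewrite big_mkcond /=.
under eq_bigr => k _ do
  rewrite indicatorE (inclusion_exclusion_forall _ E (fun p => k p.1 == k p.2)) scaler_suml.
rewrite exchange_big /=; apply: eq_bigr => S _.
rewrite -sum_constant_on_edges scaler_sumr [in RHS]big_mkcond /=.
by apply: eq_bigr => k _; rewrite indicatorE !scalerA mulrC.
Qed.

End PowerSums.

Lemma proper_col_edge_rel (V : finType) (E : {set V * V}) N (k : {ffun V -> 'I_N}) :
  proper_col (edge_rel E) k = [forall p in E, k p.1 != k p.2].
Proof.
apply/forallP/forall_inP => [kprop p pE|kE x].
  by move/forallP/(_ p.2)/implyP: (kprop p.1); apply; rewrite /edge_rel -surjective_pairing pE.
apply/forallP => y; apply/implyP => /orP [xyE|yxE]; first exact: (kE (x, y)).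
by rewrite eq_sym; exact: (kE (y, x)).
Qed.

Lemma chrom_incl_excl (V : finType) (e : rel V) (E : {set V * V}) N :
  (0 < N)%N -> e =2 edge_rel E ->
  chrom e N =
  \sum_(S : {set V * V} | S \subset E) (-1) ^+ #|S| *: powersum_prod N (comp_sizes S).
Proof.
move=> N_gt0 eE; rewrite -sum_proper_incl_excl //; apply: eq_bigl => k.
rewrite -proper_col_edge_rel; apply: eq_forallb => x; apply: eq_forallb => y.
by rewrite eE.
Qed.

Lemma size_le_sumn (s : seq nat) : all (fun k => 0 < k)%N s -> (size s <= sumn s)%N.
Proof. by elim: s => //= x s IH /andP [x_gt0 /IH]; rewrite -add1n; apply: leq_add. Qed.

Lemma mem_leq_sumn (s : seq nat) x : x \in s -> (x <= sumn s)%N.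
Proof.
elim: s => //= y s IH; rewrite inE => /predU1P [->|/IH]; first exact: leq_addr.
by move/leq_trans; apply; apply: leq_addl.
Qed.

(* The witness is [s] sorted decreasingly and padded with zeros to length [n]. *)
Lemma partn_of_composition n (s : seq nat) :
  all (fun k => 0 < k)%N s -> sumn s = n ->
  exists2 t : ptuple n, is_partn t & perm_eq (Defs.shape t) s.
Proof.
move=> s_gt0 sum_s; pose L := sort geq s ++ nseq (n - size s) 0%N.
have size_s : (size s <= n)%N by rewrite -sum_s; apply: size_le_sumn.
have sizeL : size (map (@inord n) L) == n.
  by rewrite size_map size_cat size_sort size_nseq subnKC.
have L_small x : x \in L -> (x < n.+1)%N.
  rewrite mem_cat mem_sort => /orP [/mem_leq_sumn|/nseqP [-> _]] //.
  by rewrite sum_s ltnS.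
have valL : map val (Tuple sizeL) = L.
  rewrite /= -map_comp -[RHS]map_id; apply/eq_in_map => x /L_small x_small /=.
  by rewrite inordK.
have path_nseq0 a m : path geq a (nseq m 0%N).
  by elim: m a => //= m IH a; rewrite IH andbT.
exists (Tuple sizeL); rewrite /is_partn /Defs.shape valL.
  apply/andP; split.
    rewrite /L; case: (sort geq s) (sort_sorted (fun a b => leq_total b a) s)
      => [|x s'] /= sorted_s.
      by case: (n - size s)%N => //= m; apply: path_nseq0.
    by rewrite cat_path sorted_s path_nseq0.
  by rewrite sumn_cat sumn_nseq mul0n addn0 (perm_sumn (permEl (perm_sort _ _))) sum_s.
rewrite filter_cat (@eq_in_filter _ _ predT) ?filter_predT; last first.
  by move=> x; rewrite mem_sort => /(allP s_gt0).
have -> : [seq x <- nseq (n - size s) 0%N | (0 < x)%N] = [::].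
  by elim: (n - size s)%N.
by rewrite cats0 perm_sort.
Qed.

Lemma shape_gt0 n (t : ptuple n) : all (fun k => 0 < k)%N (Defs.shape t).
Proof. exact: filter_all. Qed.

Lemma sumn_shape n (t : ptuple n) : is_partn t -> sumn (Defs.shape t) = n.
Proof.
case/andP => _ /eqP sum_t; rewrite -[RHS]sum_t /Defs.shape.
by elim: (map val t) => //= -[|x] s IH //=; rewrite IH.
Qed.

Section PathUnion.
Variable l : seq nat.
Local Notation W := (pu_vert l).
Local Notation pvert a := (Tagged (fun i : 'I_(size l) => 'I_(nth 0%N l i)) a).
Implicit Type S : {set W * W}.

Definition path_edges : {set W * W} :=
  [set p | (tag p.1 == tag p.2) && ((val (tagged p.1)).+1 == val (tagged p.2))].

Lemma pu_edgeE : pu_edge (l := l) =2 edge_rel path_edges.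
Proof.
move=> x y; rewrite /pu_edge /edge_rel !inE /= [tag y == _]eq_sym.
by case: (tag x == tag y); rewrite ?andbF.
Qed.

Lemma pu_vert_eq (u w : W) : tag u = tag w -> val (tagged u) = val (tagged w) -> u = w.
Proof. by case: u => i a; case: w => j b /= ij; subst j => /val_inj ->. Qed.

Lemma pu_vert_card : #|W| = sumn l.
Proof.
rewrite card_tagged -[in RHS](mkseq_nth 0%N l) /mkseq -val_enum_ord -map_comp.
by congr sumn; apply: eq_map => i; rewrite card_ord.
Qed.

Lemma connect_path_tag S x y :
  S \subset path_edges -> connect (edge_rel S) x y -> tag x = tag y.
Proof.
move=> sub_S /(closed_connect_edge (a := [pred z : W | tag z == tag x])).
rewrite !inE eqxx => /(_ _)/esym/eqP -> // p /(subsetP sub_S).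
by rewrite !inE => /andP [/eqP tag_p _]; rewrite tag_p.
Qed.

Lemma path_edges_connect (x y : W) :
  tag x = tag y -> connect (edge_rel path_edges) x y.
Proof.
have first_gt0 (z : W) : (0 < nth 0%N l (tag z))%N.
  exact: leq_ltn_trans (leq0n _) (ltn_ord (tagged z)).
pose first (z : W) : W := pvert (Ordinal (first_gt0 z)).
have to_first a (z : W) : val (tagged z) = a -> connect (edge_rel path_edges) z (first z).
  elim: a z => [|a IH] z za.
    by rewrite (@pu_vert_eq (first z) z) //= za.
  have a_lt : (a < nth 0%N l (tag z))%N by apply: ltnW; rewrite -za ltn_ord.
  pose z' : W := pvert (Ordinal a_lt).
  apply: (@connect_trans _ _ z').
    by apply: connect1; rewrite /edge_rel !inE /= eqxx za eqxx orbT.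
  by rewrite (@pu_vert_eq (first z) (first z')) //; apply: IH.
move=> xy; apply: connect_trans (to_first _ x erefl) _.
rewrite edge_rel_connect_sym (@pu_vert_eq (first x) (first y)) //.
exact: to_first.
Qed.

(* Removing an edge (a, a+1) of a path separates a from a+1: the set of vertices
   off that path or at position at most a is closed under the remaining edges. *)
Lemma path_edges_cut S p :
  S \subset path_edges -> p \in path_edges -> p \notin S ->
  ~~ connect (edge_rel S) p.1 p.2.
Proof.
move=> sub_S pE pNS; move: (pE); rewrite inE => /andP [/eqP tag_p /eqP val_p].
pose a := [pred z : W | (tag z != tag p.1) || (val (tagged z) <= val (tagged p.1))%N].
have p1_a : p.1 \in a by rewrite inE leqnn orbT.
have p2_Na : p.2 \notin a.
  by rewrite inE /= -val_p ltnn orbF negbK tag_p.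
apply: contra p2_Na => /(closed_connect_edge (a := a)) <- // q qS.
move: (subsetP sub_S q qS); rewrite inE => /andP [/eqP tag_q /eqP val_q].
rewrite !inE /= -val_q.
have -> : (tag q.2 != tag p.1) = (tag q.1 != tag p.1) by rewrite tag_q.
case: (eqVneq (tag q.1) (tag p.1)) => //= tag_qp.
case: (eqVneq (val (tagged q.1)) (val (tagged p.1))) => [val_qp|]; last first.
  by rewrite ltn_neqAle => ->.
suff pq : p = q by rewrite pq qS in pNS.
have q1 : q.1 = p.1 by apply: pu_vert_eq.
have q2 : q.2 = p.2 by apply: pu_vert_eq; rewrite -?tag_q -?val_q ?q1.
by rewrite [q]surjective_pairing q1 q2 -surjective_pairing.
Qed.

Hypothesis l_gt0 : all (fun k => 0 < k)%N l.

Lemma tag_roots_onto S (i : 'I_(size l)) :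
  S \subset path_edges -> exists2 r, r \in roots (edge_rel S) & tag r = i.
Proof.
move=> sub_S; have i_gt0 : (0 < nth 0%N l i)%N by apply: (allP l_gt0); apply: mem_nth.
pose v : W := pvert (Ordinal i_gt0).
exists (comp_root S v); first exact: comp_root_in_roots.
by rewrite -(connect_path_tag sub_S (connect_root _ v)).
Qed.

Lemma card_tag_roots S :
  S \subset path_edges -> #|[set tag r | r in roots (edge_rel S)]| = size l.
Proof.
move=> sub_S; apply/eqP; rewrite eqn_leq -[X in (_ <= X)%N]card_ord max_card /=.
rewrite -[X in (X <= _)%N]card_ord -cardsT; apply: subset_leq_card.
by apply/subsetP => i _; have [r r_root <-] := tag_roots_onto i sub_S; apply: imset_f.
Qed.

Lemma roots_path_edges_gt S :
  S \subset path_edges -> S != path_edges -> (size l < #|roots (edge_rel S)|)%N.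
Proof.
move=> sub_S S_neq; have /subsetPn [p pE pNS] : ~~ (path_edges \subset S).
  by apply: contra S_neq => sub_E; rewrite eqEsubset sub_S sub_E.
rewrite -(card_tag_roots sub_S) ltn_neqAle leq_imset_card andbT.
apply/imset_injP => tag_inj; move: (pE); rewrite inE => /andP [/eqP tag_p _].
have /comp_rootP : comp_root S p.1 = comp_root S p.2.
  apply: tag_inj; rewrite ?comp_root_in_roots //.
  by rewrite -!(connect_path_tag sub_S (connect_root _ _)).
by apply/negP; apply: path_edges_cut.
Qed.

Lemma card_tag_fiber (i : 'I_(size l)) : #|[pred v : W | tag v == i]| = nth 0%N l i.
Proof.
pose b (a : 'I_(nth 0%N l i)) : W := pvert a.
have b_inj : injective b.
  by move=> a1 a2 /(congr1 (fun v : W => val (tagged v))) /val_inj.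
rewrite -[RHS]card_ord -(card_codom b_inj); apply: eq_card => v; rewrite !inE.
apply/eqP/codomP => [|[a ->] //]; case: v => j a /= ji; subst j; by exists a.
Qed.

Lemma comp_sizes_path_edges : perm_eq (comp_sizes path_edges) l.
Proof.
have sub_E : path_edges \subset path_edges by [].
have rootE r v : r \in roots (edge_rel path_edges) ->
    (comp_root path_edges v == r) = (tag v == tag r).
  move=> r_root; rewrite -{1}(comp_root_fix r_root); apply/eqP/eqP.
    by move/comp_rootP/(connect_path_tag sub_E).
  by move/path_edges_connect/comp_rootP.
have -> : comp_sizes path_edges = map (fun i : 'I_(size l) => nth 0%N l i)
    (map tag (enum (roots (edge_rel path_edges)))).
  rewrite -map_comp; apply/eq_in_map => r; rewrite mem_enum => r_root /=.
  by rewrite -card_tag_fiber; apply: eq_card => v; rewrite !inE rootE.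
rewrite -[X in perm_eq _ X](mkseq_nth 0%N) /mkseq -val_enum_ord -map_comp.
apply: perm_map.
apply: uniq_perm; rewrite ?enum_uniq //.
  rewrite map_inj_in_uniq ?enum_uniq // => r1 r2; rewrite !mem_enum => r1_root r2_root.
  by move/eqP; rewrite -rootE // comp_root_fix // => /eqP.
move=> i; rewrite mem_enum; have [r r_root <-] := tag_roots_onto i sub_E.
by rewrite map_f // mem_enum.
Qed.

End PathUnion.

Lemma pu_edge_irr l : irreflexive (@pu_edge l).
Proof. by move=> x; rewrite /pu_edge eqxx orbb gtn_eqF. Qed.

Lemma chrom_card0 (V : finType) (e : rel V) N : #|V| = 0%N -> chrom e N = 1.
Proof.
move=> V0; have noV (x : V) : False by move: (card0_eq V0 x); rewrite !inE.
rewrite /chrom (eq_big predT (fun=> 1)) => [|k|k _]; last 2 first.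
- by apply/forallP => x; case: (noV x).
- by apply: big1 => x; case: (noV x).
by rewrite sumr_const card_ffun V0 expn0.
Qed.

Section Span.
Variable n : nat.
Implicit Type P : {mpoly rat[n]}.

Definition in_XP_span P :=
  exists c : ptuple n -> rat, P = \sum_(t : ptuple n | is_partn t) c t *: XP n t.

Lemma in_XP_spanD P Q : in_XP_span P -> in_XP_span Q -> in_XP_span (P + Q).
Proof.
move=> [c ->] [d ->]; exists (fun t => c t + d t).
by rewrite -big_split; apply: eq_bigr => t _; rewrite scalerDl.
Qed.

Lemma in_XP_spanZ a P : in_XP_span P -> in_XP_span (a *: P).
Proof.
move=> [c ->]; exists (fun t => a * c t).
by rewrite scaler_sumr; apply: eq_bigr => t _; rewrite scalerA.
Qed.

Lemma in_XP_span_sum (I : finType) (A : pred I) (F : I -> {mpoly rat[n]}) :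
  (forall i, A i -> in_XP_span (F i)) -> in_XP_span (\sum_(i | A i) F i).
Proof.
move=> spanF; apply: big_ind => //; last exact: in_XP_spanD.
by exists (fun=> 0); rewrite big1 // => t _; rewrite scale0r.
Qed.

Lemma in_XP_span_XP (t : ptuple n) : is_partn t -> in_XP_span (XP n t).
Proof.
move=> t_partn; exists (fun t' => (t' == t)%:R).
rewrite (bigD1 t) //= eqxx scale1r big1 ?addr0 // => t' /andP [_ /negbTE ->].
by rewrite scale0r.
Qed.

(* Induction on n - size s: in the expansion of X_{P_s}, every edge set but the
   full one has more components than s has parts. *)
Lemma in_XP_span_powersum_prod s :
  (0 < n)%N -> all (fun k => 0 < k)%N s -> sumn s = n -> in_XP_span (powersum_prod n s).
Proof.
move=> n_gt0; move: {2}(n - size s)%N.+1 (ltnSn (n - size s)) => m.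
elim: m s => // m IH s lt_m s_gt0 sum_s.
have [t t_partn perm_t] := partn_of_composition s_gt0 sum_s.
set l := Defs.shape t in perm_t; set E := path_edges l.
have l_gt0 : all (fun k => 0 < k)%N l by apply: shape_gt0.
have card_W : #|pu_vert l| = n by rewrite pu_vert_card sumn_shape.
rewrite -(powersum_prod_perm _ perm_t) -(powersum_prod_perm _ (comp_sizes_path_edges l_gt0)).
have := chrom_incl_excl n_gt0 (pu_edgeE (l := l)); rewrite -/(XP n t) (bigD1 E) //=.
set rest := \sum_(S | _) _ => XP_E.
have -> : powersum_prod n (comp_sizes E) = (-1) ^+ #|E| *: (XP n t + (-1) *: rest).
  by rewrite XP_E scaleN1r addrK scalerA -exprMn mulrNN mulr1 expr1n scale1r.
apply/in_XP_spanZ/in_XP_spanD; first exact: in_XP_span_XP.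
apply/in_XP_spanZ/in_XP_span_sum => S /andP [sub_S S_neq]; apply/in_XP_spanZ/IH.
- have := roots_path_edges_gt l_gt0 sub_S S_neq.
  rewrite -size_comp_sizes (perm_size perm_t) => lt_size.
  have le_n : (size (comp_sizes S) <= n)%N.
    by rewrite -card_W -(sumn_comp_sizes S) size_le_sumn ?comp_sizes_gt0.
  rewrite ltnS in lt_m; apply: leq_trans lt_m.
  by rewrite ltn_sub2l // (leq_trans lt_size le_n).
- exact: comp_sizes_gt0.
- by rewrite sumn_comp_sizes.
Qed.

End Span.

Lemma in_XP_span_one_empty : in_XP_span (1 : {mpoly rat[0]}).
Proof.
exists (fun=> 1); rewrite (big_pred1 [tuple]) => [|t]; last first.
  by rewrite tuple0; apply/esym/eqP.
by rewrite scale1r /XP chrom_card0 // pu_vert_card sumn_shape.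
Qed.

Lemma in_XP_span_chrom (V : finType) (e : rel V) :
  ssrbool.symmetric e -> in_XP_span (chrom e #|V|).
Proof.
move=> e_sym; case: (posnP #|V|) => [V0|V_gt0].
  by rewrite chrom_card0 //; move: #|V| V0 => n ->; apply: in_XP_span_one_empty.
rewrite (@chrom_incl_excl _ _ [set p | e p.1 p.2]) //; last first.
  by move=> x y; rewrite /edge_rel !inE /= (e_sym y x) orbb.
apply: in_XP_span_sum => S _; apply/in_XP_spanZ/in_XP_span_powersum_prod => //.
- exact: comp_sizes_gt0.
- exact: sumn_comp_sizes.
Qed.

Definition mnm_ones (N : nat) : 'X_{1..N} := [multinom 1%N | i < N].

Lemma mnm_sum_mnm1E (V : finType) N (k : V -> 'I_N) (i : 'I_N) :
  (\sum_(v : V) mnm1 (k v))%MM i = #|[pred v | k v == i]|.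
Proof.
rewrite mnm_sumE -sum1_card [RHS]big_mkcond /=; apply: eq_bigr => v _.
by rewrite mnm1E inE; case: (k v == i).
Qed.

Lemma mnm_sum_mnm1_ones (V : finType) N (k : V -> 'I_N) :
  #|V| = N -> ((\sum_(v : V) mnm1 (k v))%MM == mnm_ones N) = injectiveb k.
Proof.
move=> card_V; apply/eqP/injectiveP => [onesE x y kxy|k_inj].
  have /card_le1_eqP fiber_le1 : (#|[pred v | k v == k x]| <= 1)%N.
    by rewrite -mnm_sum_mnm1E onesE mnmE.
  by apply: fiber_le1; rewrite inE /= ?kxy.
apply/mnmP => i; rewrite mnm_sum_mnm1E mnmE.
have /codomP [x ->] : i \in codom k.
  by apply: inj_card_onto => //; rewrite card_V card_ord.
by rewrite -(card1 x); apply: eq_card => v; rewrite !inE (inj_eq k_inj).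
Qed.

(* Only injective colourings contribute to x_1 ... x_n, and all of them are proper. *)
Lemma mcoeff_ones_chrom (V : finType) (e : rel V) N :
  irreflexive e -> #|V| = N -> mcoeff (mnm_ones N) (chrom e N) = N`!%:R.
Proof.
move=> e_irr card_V; rewrite /chrom raddf_sum /=.
under eq_bigr => k _ do rewrite -(big_morph _ (@mpolyXD _ _) (@mpolyX0 _ _))
  mcoeffX (mnm_sum_mnm1_ones _ card_V).
have inj_proper (k : {ffun V -> 'I_N}) : injectiveb k -> proper_col e k.
  move/injectiveP=> k_inj; apply/forallP => x; apply/forallP => y; apply/implyP => exy.
  by apply: contraTneq exy => /k_inj ->; rewrite e_irr.
have -> : N`! = #|[set k : {ffun V -> 'I_N} | injectiveb k]|.
  by rewrite card_inj_ffuns card_ord card_V ffactnn.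
rewrite -natr_sum; congr _%:R.
rewrite -sum1_card big_mkcond [RHS]big_mkcond /=; apply: eq_bigr => k _.
by rewrite inE; case: (boolP (injectiveb k)) => [/inj_proper ->|]; last by case: ifP.
Qed.

Theorem theorem3p4 (V : finType) (e : rel V)
  (e_sym : ssrbool.symmetric e) (e_irr : irreflexive e) :
  let n := #|V| in
  (exists c : ptuple n -> rat,
      chrom e n = \sum_(t : ptuple n | is_partn t) c t *: XP n t) /\
  (forall c : ptuple n -> rat,
      chrom e n = \sum_(t : ptuple n | is_partn t) c t *: XP n t ->
      \sum_(t : ptuple n | is_partn t) c t = 1).
Proof.
move=> n; split; first exact: in_XP_span_chrom.
move=> c /(congr1 (mcoeff (mnm_ones n))).
rewrite mcoeff_ones_chrom // raddf_sum /= (eq_bigr (fun t => c t * n`!%:R)); last first.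
  move=> t t_partn; rewrite mcoeffZ mcoeff_ones_chrom ?pu_vert_card ?sumn_shape //.
  exact: pu_edge_irr.
rewrite -mulr_suml -[X in X = _ -> _]mul1r => /esym/mulIf; apply.
by rewrite Num.Theory.pnatr_eq0 -lt0n fact_gt0.
Qed.
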